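(* For a negative game $A$, let $!A$ be the infinitary parallel composition of countably many copies of $A$, i.e. the event structure whose events are the pairs $(i,a)$ with $i \in \omega$ and $a \in A$, with causal order, conflict and polarity inherited componentwise from $A$ (and no causality or conflict between distinct copies). Equip $!A$ with the groups \begin{align*} \mathcal{N}_{!A} &= \{ (\pi, (\alpha_i)_{i\in \omega}) \mid \pi \text{ is a permutation of $\omega$, and } \alpha_i \in \mathcal{N}_A \text{ for all }i \in \omega \} \\ \mathcal{P}_{!A} &= \{ (\alpha_i)_{i \in \omega} \mid \alpha_i \in \mathcal{P}_A \text{ for all }i \in \omega \} \end{align*} under componentwise multiplication, with actions on $!A$ defined by \begin{align*} \mathit{act}_{\mathcal{N}}((\pi, (\alpha_i)_{i\in \omega}), (i, a)) &= (\pi(i), \alpha_i(a)) \\ \mathit{act}_{\mathcal{P}}((\alpha_i)_{i\in \omega}, (i, a)) &= (i, \alpha_i(a)) \end{align*} and distributive law \begin{align*} \lambda_{!A} : \mathcal{N}_{!A} \times \mathcal{P}_{!A} &\longrightarrow \mathcal{P}_{!A} \times \mathcal{N}_{!A} \\ ((\pi, (\alpha_i)_{i \in \omega}), (\beta_i)_{i \in \omega}) &\longmapsto \left(\left(\beta'_{\pi^{-1}(i)}\right)_{i \in \omega}, (\pi, (\alpha'_i)_{i \in \omega})\right) \end{align*} where for every $i \in \omega$, $(\beta'_i, \alpha'_i) = \lambda_A(\alpha_i, \beta_i).$ This satisfies the axioms for a game.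
   Context: An event structure (with polarity) is a partial order $(A,\leq)$ with finitely many predecessors for each element, a polarity function $A \to \{-,+\}$, and an irreflexive symmetric hereditary conflict relation. An automorphism $\alpha$ of $A$ is negative if whenever $\alpha$ fixes a configuration $x$ and $x \subseteq^+ y$ (extension by positive events only) then $\alpha$ fixes $y$; positive is defined dually with $\subseteq^-$. A game is an event structure $A$ equipped with a group $\mathcal{N}_A$ with a negative left action $\mathit{act}_{\mathcal{N}}$ on $A$, a group $\mathcal{P}_A$ with a positive left action $\mathit{act}_{\mathcal{P}}$ on $A$, and a distributive law $\lambda_A : \mathcal{N}_A \times \mathcal{P}_A \to \mathcal{P}_A \times \mathcal{N}_A$ between the monads $\mathcal{N}_A \times (-)$ and $\mathcal{P}_A \times (-)$ on Set, such that acting by $\beta$ then by $\alpha$ equals acting by the result of applying $\lambda_A$ to $(\alpha,\beta)$ (i.e. the two actions are permuted by $\lambda_A$). A game is negative if all its initial (minimal) moves are negative. $!A$ denotes the resource modality (exponential). *)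

From Stdlib Require Import List.
Import ListNotations.


Inductive pol := Neg | Pos.

Record esd := {
  ev : Type;
  leq : ev -> ev -> Prop;
  polarity : ev -> pol;
  conf : ev -> ev -> Prop }.

Definition is_es (E : esd) : Prop :=
  (forall e, leq E e e) /\
  (forall e1 e2 e3, leq E e1 e2 -> leq E e2 e3 -> leq E e1 e3) /\
  (forall e1 e2, leq E e1 e2 -> leq E e2 e1 -> e1 = e2) /\
  (forall e, exists l : list (ev E), forall e', leq E e' e -> In e' l) /\
  (forall e, ~ conf E e e) /\
  (forall e1 e2, conf E e1 e2 -> conf E e2 e1) /\
  (forall e1 e2 e3, conf E e1 e2 -> leq E e2 e3 -> conf E e1 e3).

Definition config (E : esd) (x : ev E -> Prop) : Prop :=
  (exists l : list (ev E), forall e, x e -> In e l) /\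
  (forall e e', x e -> leq E e' e -> x e') /\
  (forall e e', x e -> x e' -> ~ conf E e e').

Definition ext_by (E : esd) (p : pol) (x y : ev E -> Prop) : Prop :=
  config E x /\ config E y /\ (forall e, x e -> y e) /\
  (forall e, y e -> ~ x e -> polarity E e = p).

Definition fixes (E : esd) (f : ev E -> ev E) (x : ev E -> Prop) : Prop :=
  forall e, x e -> f e = e.

Definition automorphism (E : esd) (f : ev E -> ev E) : Prop :=
  (forall e1 e2, f e1 = f e2 -> e1 = e2) /\
  (forall e, exists e', f e' = e) /\
  (forall e1 e2, leq E (f e1) (f e2) <-> leq E e1 e2) /\
  (forall e1 e2, conf E (f e1) (f e2) <-> conf E e1 e2) /\
  (forall e, polarity E (f e) = polarity E e).

Definition negative_auto (E : esd) (f : ev E -> ev E) : Prop :=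
  forall x y, config E x -> fixes E f x -> ext_by E Pos x y -> fixes E f y.

Definition positive_auto (E : esd) (f : ev E -> ev E) : Prop :=
  forall x y, config E x -> fixes E f x -> ext_by E Neg x y -> fixes E f y.

Record grp := {
  gcar : Type;
  gmul : gcar -> gcar -> gcar;
  gone : gcar;
  ginv : gcar -> gcar }.

Definition is_group (G : grp) : Prop :=
  (forall a b c, gmul G a (gmul G b c) = gmul G (gmul G a b) c) /\
  (forall a, gmul G (gone G) a = a) /\
  (forall a, gmul G a (gone G) = a) /\
  (forall a, gmul G (ginv G a) a = gone G) /\
  (forall a, gmul G a (ginv G a) = gone G).

Definition is_left_action (G : grp) (E : esd) (act : gcar G -> ev E -> ev E)
  (good : (ev E -> ev E) -> Prop) : Prop :=
  (forall e, act (gone G) e = e) /\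
  (forall g h e, act (gmul G g h) e = act g (act h e)) /\
  (forall g, automorphism E (act g)) /\
  (forall g, good (act g)).

Record game := {
  gE : esd;
  gN : grp;
  gP : grp;
  actN : gcar gN -> ev gE -> ev gE;
  actP : gcar gP -> ev gE -> ev gE;
  lam : gcar gN -> gcar gP -> gcar gP * gcar gN }.

(** Distributive law  N x (P x -) => P x (N x -)  between the writer monads
    N x (-) and P x (-) on Set; by naturality it is given by a function
    lam : N x P -> P x N, and the four distributive-law axioms read: *)
Definition is_distr_law (N P : grp) (l : gcar N -> gcar P -> gcar P * gcar N)
  : Prop :=
  (forall n, l n (gone P) = (gone P, n)) /\
  (forall p, l (gone N) p = (p, gone N)) /\
  (forall n1 n2 p,
     l (gmul N n1 n2) p =
     let (p1, n2') := l n2 p in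
     let (p2, n1') := l n1 p1 in (p2, gmul N n1' n2')) /\
  (forall n p1 p2,
     l n (gmul P p1 p2) =
     let (p1', n1) := l n p1 in
     let (p2', n2) := l n1 p2 in (gmul P p1' p2', n2)).

Definition is_game (G : game) : Prop :=
  is_es (gE G) /\
  is_group (gN G) /\ is_group (gP G) /\
  is_left_action (gN G) (gE G) (actN G) (negative_auto (gE G)) /\
  is_left_action (gP G) (gE G) (actP G) (positive_auto (gE G)) /\
  is_distr_law (gN G) (gP G) (lam G) /\
  (forall a b e,
     actN G a (actP G b e) = actP G (fst (lam G a b)) (actN G (snd (lam G a b)) e)).

Definition negative_game (G : game) : Prop :=
  forall e : ev (gE G),
    (forall e', leq (gE G) e' e -> e' = e) -> polarity (gE G) e = Neg.

Record perm := {
  pf : nat -> nat;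
  pb : nat -> nat;
  pfb : forall n, pf (pb n) = n;
  pbf : forall n, pb (pf n) = n }.

Definition perm_id : perm :=
  {| pf := fun n => n; pb := fun n => n;
     pfb := fun n => eq_refl; pbf := fun n => eq_refl |}.

Definition perm_comp (p q : perm) : perm.
Proof.
  refine {| pf := fun n => pf p (pf q n); pb := fun n => pb q (pb p n) |};
  intro n; [rewrite pfb, pfb | rewrite pbf, pbf]; reflexivity.
Defined.

Definition perm_inv (p : perm) : perm :=
  {| pf := pb p; pb := pf p; pfb := pbf p; pbf := pfb p |}.

Definition bang_es (E : esd) : esd :=
  {| ev := (nat * ev E)%type;
     leq := fun x y => fst x = fst y /\ leq E (snd x) (snd y);
     polarity := fun x => polarity E (snd x);
     conf := fun x y => fst x = fst y /\ conf E (snd x) (snd y) |}.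

(** N_{!A}: pairs (π, (α_i)_i); the product making act_N a left action is
    (π,α)(π',α') = (π∘π', (α_{π'(i)} α'_i)_i)  (wreath product). *)
Definition bang_N (N : grp) : grp :=
  {| gcar := (perm * (nat -> gcar N))%type;
     gmul := fun x y =>
       (perm_comp (fst x) (fst y),
        fun i => gmul N (snd x (pf (fst y) i)) (snd y i));
     gone := (perm_id, fun _ => gone N);
     ginv := fun x =>
       (perm_inv (fst x), fun i => ginv N (snd x (pb (fst x) i))) |}.

Definition bang_P (P : grp) : grp :=
  {| gcar := nat -> gcar P;
     gmul := fun x y i => gmul P (x i) (y i);
     gone := fun _ => gone P;
     ginv := fun x i => ginv P (x i) |}.

Definition bang (A : game) : game :=
  {| gE := bang_es (gE A);
     gN := bang_N (gN A);
     gP := bang_P (gP A);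
     actN := fun g (x : nat * ev (gE A)) =>
               (pf (fst g) (fst x), actN A (snd g (fst x)) (snd x));
     actP := fun b (x : nat * ev (gE A)) =>
               (fst x, actP A (b (fst x)) (snd x));
     lam := fun g (b : nat -> gcar (gP A)) =>
       ((fun i => fst (lam A (snd g (pb (fst g) i)) (b (pb (fst g) i)))),
        (fst g, fun i => snd (lam A (snd g i) (b i)))) |}.

(** A copy index is moved only by the permutation part of an element of
    [N_{!A}], so every axiom of [!A] reduces to the same axiom of [A] applied
    copy by copy.  The one exception is negativity of the [N_{!A}]-action:
    an element fixing a configuration [x] may still permute copies, and we
    must show it leaves in place every copy [i] touched by a positive
    extension [y] of [x].  Below any event of [y] in copy [i] lies a minimal
    event, which is negative because [A] is a negative game; so it already
    belongs to [x], and being fixed it forces [π(i) = i]. *)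

From Stdlib Require Import List Lia Classical ClassicalEpsilon
  FunctionalExtensionality ProofIrrelevance.

Ltac split_and := repeat match goal with |- _ /\ _ => split end.

Lemma perm_ext (p q : perm) :
  (forall n, pf p n = pf q n) -> (forall n, pb p n = pb q n) -> p = q.
Proof.
  destruct p as [f b fb bf], q as [f' b' fb' bf']; simpl; intros Hf Hb.
  apply functional_extensionality in Hf, Hb; subst.
  f_equal; apply proof_irrelevance.
Qed.

Lemma pf_injective (p : perm) i j : pf p i = pf p j -> i = j.
Proof. intro H; rewrite <- (pbf p i), <- (pbf p j), H; reflexivity. Qed.

Section Minimal.

Variable E : esd.
Hypothesis HE : is_es E.

Definition minimal (e : ev E) : Prop := forall e', leq E e' e -> e' = e.

Lemma minimal_below_bounded (n : nat) :
  forall a (l : list (ev E)), length l <= n ->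
  (forall e, leq E e a -> In e l) ->
  exists a0, leq E a0 a /\ minimal a0.
Proof.
  destruct HE as (Hrefl & Htrans & Hantisym & _).
  assert (Hdec : forall x y : ev E, {x = y} + {x <> y})
    by (intros; apply excluded_middle_informative).
  induction n as [|n IH]; intros a l Hlen Hl.
  - destruct l; [destruct (Hl a (Hrefl a)) | simpl in Hlen; lia].
  - destruct (classic (minimal a)) as [Ha | Ha]; [exists a; auto|].
    apply not_all_ex_not in Ha as [b Hb].
    apply imply_to_and in Hb as [Hba Hne].
    (* the predecessors of [b] are those of [a], except [a] itself *)
    destruct (IH b (remove Hdec a l)) as (a0 & Ha0b & Ha0).
    + pose proof (remove_length_lt Hdec l a (Hl a (Hrefl a))); lia.
    + intros e He; apply in_in_remove.
      * intros ->; apply Hne, Hantisym; auto.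
      * apply Hl; eauto.
    + exists a0; eauto.
Qed.

Lemma minimal_below (a : ev E) : exists a0, leq E a0 a /\ minimal a0.
Proof.
  destruct HE as (_ & _ & _ & Hfin & _).
  destruct (Hfin a) as [l Hl]; eapply minimal_below_bounded; eauto.
Qed.

End Minimal.

Section BangEventStructure.

Variable E : esd.

Lemma bang_es_is_es : is_es E -> is_es (bang_es E).
Proof.
  intros (Hrefl & Htrans & Hantisym & Hfin & Hirr & Hsym & Hher).
  unfold is_es; simpl; split_and.
  - intros [i a]; simpl; auto.
  - intros [i1 a1] [i2 a2] [i3 a3] [-> H12] [-> H23]; simpl; eauto.
  - intros [i1 a1] [i2 a2] [Hi H12] [_ H21]; simpl in *; f_equal; auto.
  - intros [i a]; destruct (Hfin a) as [l Hl].
    exists (map (pair i) l); intros [j b] [Hj Hb]; simpl in *; subst.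
    apply in_map; auto.
  - intros [i a] [_ H]; eapply Hirr; eauto.
  - intros [i1 a1] [i2 a2] [Hi H]; simpl in *; auto.
  - intros [i1 a1] [i2 a2] [i3 a3] [Hi H] [Hi' H']; simpl in *; split;
      [congruence | eauto].
Qed.

Definition slice (x : ev (bang_es E) -> Prop) (i : nat) : ev E -> Prop :=
  fun a => x (i, a).

Lemma config_slice x i : config (bang_es E) x -> config E (slice x i).
Proof.
  intros [[l Hl] [Hdown Hcf]]; unfold config; split_and.
  - exists (map snd l); intros e He; exact (in_map snd l (i, e) (Hl _ He)).
  - intros e e' He Hle; apply (Hdown (i, e)); simpl; auto.
  - intros e e' He He' Hc; apply (Hcf _ _ He He'); simpl; auto.
Qed.

Lemma ext_by_slice q x y i :
  ext_by (bang_es E) q x y -> ext_by E q (slice x i) (slice y i).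
Proof.
  intros (Hx & Hy & Hxy & Hpol); unfold ext_by; split_and;
    try apply config_slice; auto.
  - intros e He; apply (Hxy (i, e)); auto.
  - intros e He Hn; apply (Hpol (i, e)); auto.
Qed.

Definition bang_map (p : perm) (f : nat -> ev E -> ev E)
  (x : ev (bang_es E)) : ev (bang_es E) :=
  (pf p (fst x), f (fst x) (snd x)).

Lemma automorphism_bang_map p f :
  (forall i, automorphism E (f i)) -> automorphism (bang_es E) (bang_map p f).
Proof.
  intros Hf; unfold automorphism, bang_map; split_and.
  - intros [i1 a1] [i2 a2] H; simpl in H; injection H as Hi Ha.
    apply pf_injective in Hi; subst; f_equal; apply (Hf i2); auto.
  - intros [j b]; destruct (Hf (pb p j)) as (_ & Hsurj & _).
    destruct (Hsurj b) as [a <-]; exists (pb p j, a); simpl.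
    rewrite pfb; reflexivity.
  - intros [i1 a1] [i2 a2]; simpl; split; intros [Hi H].
    + apply pf_injective in Hi; subst; split; auto; apply (Hf i2); auto.
    + subst; split; auto; apply (Hf i2); auto.
  - intros [i1 a1] [i2 a2]; simpl; split; intros [Hi H].
    + apply pf_injective in Hi; subst; split; auto; apply (Hf i2); auto.
    + subst; split; auto; apply (Hf i2); auto.
  - intros [i a]; apply (Hf i).
Qed.

Lemma fixes_bang_map_slice p f x i :
  fixes (bang_es E) (bang_map p f) x -> fixes E (f i) (slice x i).
Proof. intros Hfix a Ha; specialize (Hfix _ Ha); injection Hfix; auto. Qed.

Lemma fixes_bang_map p f x :
  (forall i a, x (i, a) -> pf p i = i) ->
  (forall i, fixes E (f i) (slice x i)) ->
  fixes (bang_es E) (bang_map p f) x.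
Proof.
  intros Hp Hf [i a] Ha; unfold bang_map; simpl.
  rewrite (Hp i a Ha), (Hf i a Ha); reflexivity.
Qed.

Lemma positive_auto_bang_map f :
  (forall i, positive_auto E (f i)) ->
  positive_auto (bang_es E) (bang_map perm_id f).
Proof.
  intros Hf x y Hx Hfix Hext; apply fixes_bang_map; [reflexivity|].
  intro i; apply (Hf i (slice x i)).
  - apply config_slice; auto.
  - eapply fixes_bang_map_slice; eauto.
  - apply ext_by_slice; auto.
Qed.

Hypothesis HE : is_es E.
Hypothesis minimal_negative : forall e, minimal E e -> polarity E e = Neg.

Lemma bang_map_fixes_extended_copy p f x y i a :
  fixes (bang_es E) (bang_map p f) x -> ext_by (bang_es E) Pos x y ->
  y (i, a) -> pf p i = i.
Proof.
  intros Hfix (_ & Hy & _ & Hpol) Hya.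
  destruct (minimal_below E HE a) as (a0 & Ha0a & Ha0).
  assert (Hya0 : y (i, a0))
    by (destruct Hy as (_ & Hdown & _); apply (Hdown (i, a)); simpl; auto).
  assert (Hxa0 : x (i, a0)).
  { apply NNPP; intro Hn; specialize (Hpol _ Hya0 Hn); simpl in Hpol.
    rewrite minimal_negative in Hpol by exact Ha0; discriminate. }
  specialize (Hfix _ Hxa0); injection Hfix; auto.
Qed.

Lemma negative_auto_bang_map p f :
  (forall i, negative_auto E (f i)) -> negative_auto (bang_es E) (bang_map p f).
Proof.
  intros Hf x y Hx Hfix Hext; apply fixes_bang_map.
  - intros i a; eapply bang_map_fixes_extended_copy; eauto.
  - intro i; apply (Hf i (slice x i)).
    + apply config_slice; auto.
    + eapply fixes_bang_map_slice; eauto.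
    + apply ext_by_slice; auto.
Qed.

End BangEventStructure.

Section BangGroups.

Variables N P : grp.

Lemma bang_N_ext (g h : gcar (bang_N N)) :
  (forall n, pf (fst g) n = pf (fst h) n) ->
  (forall n, pb (fst g) n = pb (fst h) n) ->
  (forall i, snd g i = snd h i) -> g = h.
Proof.
  destruct g as [p f], h as [q k]; simpl; intros Hf Hb Hk.
  rewrite (perm_ext p q Hf Hb), (functional_extensionality f k Hk); reflexivity.
Qed.

Lemma bang_N_is_group : is_group N -> is_group (bang_N N).
Proof.
  intros (Hassoc & Hmul1g & Hmulg1 & Hmulvg & Hmulgv); unfold is_group;
    split_and; intros; apply bang_N_ext; simpl; intros; auto using pfb, pbf.
  rewrite pbf; auto.
Qed.

Lemma bang_P_is_group : is_group P -> is_group (bang_P P).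
Proof.
  intros (Hassoc & Hmul1g & Hmulg1 & Hmulvg & Hmulgv); unfold is_group;
    split_and; intros; apply functional_extensionality; intro; simpl; auto.
Qed.

End BangGroups.

Definition bang_actN {N : grp} {E : esd} (act : gcar N -> ev E -> ev E)
  (g : gcar (bang_N N)) : ev (bang_es E) -> ev (bang_es E) :=
  bang_map E (fst g) (fun i => act (snd g i)).

Definition bang_actP {P : grp} {E : esd} (act : gcar P -> ev E -> ev E)
  (b : gcar (bang_P P)) : ev (bang_es E) -> ev (bang_es E) :=
  bang_map E perm_id (fun i => act (b i)).

Definition bang_lam {N P : grp} (l : gcar N -> gcar P -> gcar P * gcar N)
  (g : gcar (bang_N N)) (b : gcar (bang_P P)) :
  gcar (bang_P P) * gcar (bang_N N) :=
  (fun i => fst (l (snd g (pb (fst g) i)) (b (pb (fst g) i))),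
   (fst g, fun i => snd (l (snd g i) (b i)))).

Section BangActions.

Variables (N P : grp) (E : esd).

Lemma bang_actN_is_left_action (act : gcar N -> ev E -> ev E) :
  is_es E -> (forall e, minimal E e -> polarity E e = Neg) ->
  is_left_action N E act (negative_auto E) ->
  is_left_action (bang_N N) (bang_es E) (bang_actN act)
    (negative_auto (bang_es E)).
Proof.
  intros HE Hmin (Hact1 & HactM & Haut & Hneg); unfold is_left_action;
    split_and.
  - intros [i a]; unfold bang_actN, bang_map; simpl; rewrite Hact1; reflexivity.
  - intros [p f] [q k] [i a]; unfold bang_actN, bang_map; simpl.
    rewrite HactM; reflexivity.
  - intro g; apply automorphism_bang_map; auto.
  - intro g; apply negative_auto_bang_map; auto.
Qed.

Lemma bang_actP_is_left_action (act : gcar P -> ev E -> ev E) :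
  is_left_action P E act (positive_auto E) ->
  is_left_action (bang_P P) (bang_es E) (bang_actP act)
    (positive_auto (bang_es E)).
Proof.
  intros (Hact1 & HactM & Haut & Hpos); unfold is_left_action; split_and.
  - intros [i a]; unfold bang_actP, bang_map; simpl; rewrite Hact1; reflexivity.
  - intros b c [i a]; unfold bang_actP, bang_map; simpl.
    rewrite HactM; reflexivity.
  - intro b; apply automorphism_bang_map; auto.
  - intro b; apply positive_auto_bang_map; auto.
Qed.

Lemma distr_law_mul_N (l : gcar N -> gcar P -> gcar P * gcar N) n1 n2 b :
  is_distr_law N P l ->
  l (gmul N n1 n2) b =
  (fst (l n1 (fst (l n2 b))),
   gmul N (snd (l n1 (fst (l n2 b)))) (snd (l n2 b))).
Proof.
  intros (_ & _ & HlM & _); rewrite HlM.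
  destruct (l n2 b) as [b' n2']; simpl; destruct (l n1 b'); reflexivity.
Qed.

Lemma distr_law_mul_P (l : gcar N -> gcar P -> gcar P * gcar N) n b1 b2 :
  is_distr_law N P l ->
  l n (gmul P b1 b2) =
  (gmul P (fst (l n b1)) (fst (l (snd (l n b1)) b2)),
   snd (l (snd (l n b1)) b2)).
Proof.
  intros (_ & _ & _ & HMl); rewrite HMl.
  destruct (l n b1) as [b1' n']; simpl; destruct (l n' b2); reflexivity.
Qed.

Lemma bang_lam_is_distr_law (l : gcar N -> gcar P -> gcar P * gcar N) :
  is_distr_law N P l -> is_distr_law (bang_N N) (bang_P P) (bang_lam l).
Proof.
  intros Hl; pose proof Hl as (Hl1 & H1l & _ & _).
  unfold is_distr_law, bang_lam; split_and; simpl.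
  - intros [p f]; simpl; f_equal; [|f_equal];
      apply functional_extensionality; intro i; rewrite Hl1; reflexivity.
  - intros b; f_equal; [|f_equal];
      apply functional_extensionality; intro i; rewrite H1l; reflexivity.
  - intros [p1 f1] [p2 f2] b; simpl; f_equal; [|f_equal];
      apply functional_extensionality; intro i; simpl;
      rewrite distr_law_mul_N by exact Hl; rewrite ?pfb, ?pbf; reflexivity.
  - intros [p f] b1 b2; simpl; f_equal; [|f_equal];
      apply functional_extensionality; intro i; simpl;
      rewrite distr_law_mul_P by exact Hl; reflexivity.
Qed.

Lemma bang_actions_commute (actN : gcar N -> ev E -> ev E)
  (actP : gcar P -> ev E -> ev E) (l : gcar N -> gcar P -> gcar P * gcar N) :
  (forall g b e, actN g (actP b e) = actP (fst (l g b)) (actN (snd (l g b)) e)) ->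
  forall g b e,
    bang_actN actN g (bang_actP actP b e) =
    bang_actP actP (fst (bang_lam l g b))
      (bang_actN actN (snd (bang_lam l g b)) e).
Proof.
  intros Hcomm [p f] b [i a]; unfold bang_actN, bang_actP, bang_map; simpl.
  rewrite pbf, Hcomm; reflexivity.
Qed.

End BangActions.

Theorem mainTheorem3 (A : game) :
  is_game A -> negative_game A -> is_game (bang A).
Proof.
  intros (HE & HN & HP & HactN & HactP & Hlam & Hcomm) Hneg.
  unfold is_game; split_and.
  - exact (bang_es_is_es _ HE).
  - exact (bang_N_is_group _ HN).
  - exact (bang_P_is_group _ HP).
  - exact (bang_actN_is_left_action _ _ _ HE Hneg HactN).
  - exact (bang_actP_is_left_action _ _ _ HactP).
  - exact (bang_lam_is_distr_law _ _ _ Hlam).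
  - exact (bang_actions_commute _ _ _ _ _ _ Hcomm).
Qed.
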